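(* Let $\Gamma$ be a finite set of models, $p(\bm{y}\mid\bm{\gamma})\ge0$ a marginal likelihood for each $\bm{\gamma}\in\Gamma$, and $\pi(\bm{\gamma}\mid\bm{\omega})$, $\bm{\omega}\in\mathbb{R}^q$, an arbitrary model prior (positive and differentiable in $\bm{\omega}$). Let $p(\bm{y}\mid\bm{\omega})=\sum_{\bm{\gamma}}p(\bm{y}\mid\bm{\gamma})\pi(\bm{\gamma}\mid\bm{\omega})>0$ and $\pi(\bm{\gamma}\mid\bm{y},\bm{\omega})\propto p(\bm{y}\mid\bm{\gamma})\pi(\bm{\gamma}\mid\bm{\omega})$. Then $$\nabla_{\bm{\omega}}\log p(\bm{y}\mid\bm{\omega})=E_{\bm{\gamma}}\big[\nabla_{\bm{\omega}}\log\pi(\bm{\gamma}\mid\bm{\omega})\mid\bm{y},\bm{\omega}\big]=\sum_{\bm{\gamma}}\pi(\bm{\gamma}\mid\bm{y},\bm{\omega})\nabla_{\bm{\omega}}\log\pi(\bm{\gamma}\mid\bm{\omega}).$$ If $\Gamma=\{0,1\}^p$ and $\pi(\bm{\gamma}\mid\bm{\omega})=\prod_{j=1}^p\mathrm{Bern}(\gamma_j;m_j(\bm{\omega}))$ for given differentiable $m_j:\mathbb{R}^q\to(0,1)$, then $$\nabla_{\bm{\omega}}\log p(\bm{y}\mid\bm{\omega})=\sum_{j=1}^p\frac{\nabla_{\bm{\omega}}m_j(\bm{\omega})}{m_j(\bm{\omega})[1-m_j(\bm{\omega})]}\big[\pi(\gamma_j=1\mid\bm{y},\bm{\omega})-\pi(\gamma_j=1\mid\bm{\omega})\big].$$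 Further, for the inverse logit $m_j(\bm{\omega})=(1+e^{-\bm{z}_j^T\bm{\omega}})^{-1}$ with given $\bm{z}_j\in\mathbb{R}^q$, $\nabla_{\bm{\omega}}\log p(\bm{y}\mid\bm{\omega})=\sum_{j=1}^p\bm{z}_j\big[\pi(\gamma_j=1\mid\bm{y},\bm{\omega})-\pi(\gamma_j=1\mid\bm{\omega})\big]$.
   Context: $\pi(\gamma_j=1\mid\bm{y},\bm{\omega})=\sum_{\bm{\gamma}:\gamma_j=1}\pi(\bm{\gamma}\mid\bm{y},\bm{\omega})$ is the posterior inclusion probability and $\pi(\gamma_j=1\mid\bm{\omega})=m_j(\bm{\omega})$ the prior inclusion probability. *)

From HB Require Import structures.
From mathcomp Require Import all_boot all_order all_algebra.
From mathcomp Require Import all_classical all_reals all_analysis.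
Set Implicit Arguments. Unset Strict Implicit. Unset Printing Implicit Defensive.
Import Order.TTheory GRing.Theory Num.Theory.
Import numFieldNormedType.Exports.
Local Open Scope ring_scope.

Definition grad {R : realType} {q : nat} (f : 'rV[R]_q -> R) (w : 'rV[R]_q)
  : 'rV[R]_q := \row_(k < q) ('D_(delta_mx 0 k) f w).

Definition marg {R : realType} {G : finType} {q : nat}
  (lik : G -> R) (prior : G -> 'rV[R]_q -> R) (w : 'rV[R]_q) : R :=
  \sum_(g : G) lik g * prior g w.

Definition post {R : realType} {G : finType} {q : nat}
  (lik : G -> R) (prior : G -> 'rV[R]_q -> R) (g : G) (w : 'rV[R]_q) : R :=
  lik g * prior g w / marg lik prior w.

Definition bern_prior {R : realType} {p q : nat} (m : 'I_p -> 'rV[R]_q -> R)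
  (g : {ffun 'I_p -> bool}) (w : 'rV[R]_q) : R :=
  \prod_(j < p) (if g j then m j w else 1 - m j w).

Definition post_incl {R : realType} {p q : nat}
  (lik : {ffun 'I_p -> bool} -> R) (m : 'I_p -> 'rV[R]_q -> R)
  (j : 'I_p) (w : 'rV[R]_q) : R :=
  \sum_(g : {ffun 'I_p -> bool} | g j) post lik (bern_prior m) g w.

Definition invlogit {R : realType} {q : nat} (z : 'rV[R]_q) (w : 'rV[R]_q) : R :=
  (1 + expR (- \sum_(k < q) z 0 k * w 0 k))^-1.

From HB Require Import structures.
From mathcomp Require Import all_boot all_order all_algebra.
From mathcomp Require Import all_classical all_reals all_analysis.
From mathcomp Require Import ring.
Set Implicit Arguments. Unset Strict Implicit. Unset Printing Implicit Defensive.
Import Order.TTheory GRing.Theory Num.Theory.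
Import numFieldNormedType.Exports.
Local Open Scope ring_scope.

(* The model space is finite, so the log of the mixture
   p(y | w) = sum_g p(y | g) pi(g | w) can be differentiated termwise:
     grad log p(y | w) = sum_g p(y | g) grad pi(g | w) / p(y | w)
                       = sum_g pi(g | y, w) grad log pi(g | w),
   i.e. the score of the marginal likelihood is the posterior mean of the
   prior score.  For a product-Bernoulli prior the prior score is
   sum_j (g_j - m_j) grad m_j / (m_j (1 - m_j)), and the posterior mean of
   g_j is the posterior inclusion probability.  For the inverse logit,
   grad m_j = m_j (1 - m_j) z_j cancels the denominator. *)

Definition bern {R : pzRingType} (b : bool) (mu : R) : R :=
  if b then mu else 1 - mu.

Lemma bern_gt0 (R : numDomainType) b (mu : R) : 0 < mu < 1 -> 0 < bern b mu.
Proof. by case: b => /andP[mu_gt0 mu_lt1] //=; rewrite subr_gt0. Qed.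

Section RealValuedDerivatives.
Context {R : realType} {V : normedModType R}.
Implicit Types (f : V -> R) (x v : V).

Lemma is_derive_comp_real f (g : R -> R) (dg : R) x v :
  differentiable f x -> is_derive (f x) 1 g dg ->
  is_derive x v (g \o f) (dg * 'D_v f x).
Proof.
move=> df [/[dup] g_der /derivable1_diffP g_diff <-].
have dgf : differentiable (g \o f) x by exact: differentiable_comp.
apply: DeriveDef; first exact: diff_derivable.
by rewrite deriveE // diff_comp // deriv1E //= -derive1E -deriveE // mulrC.
Qed.

Lemma is_derive_ln_comp f x v : differentiable f x -> 0 < f x ->
  is_derive x v (fun y => ln (f y)) ('D_v f x / f x).
Proof.
move=> df fx_gt0; rewrite mulrC.
exact: (is_derive_comp_real v df (is_derive1_ln fx_gt0)).
Qed.

Lemma is_derive_mull f (c : R) x v df : is_derive x v f df ->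
  is_derive x v (fun y => c * f y) (c * df).
Proof.
move=> [f_der <-]; apply: DeriveDef; last by rewrite deriveMl.
exact: derivableM (derivable_cst _ _ _) f_der.
Qed.

Lemma is_derive_big_sum (I : Type) (r : seq I) (P : pred I) (h : I -> V -> R)
    (dh : I -> R) x v :
  (forall i, is_derive x v (h i) (dh i)) ->
  is_derive x v (fun y => \sum_(i <- r | P i) h i y) (\sum_(i <- r | P i) dh i).
Proof.
move=> hder; rewrite -fct_sumE.
elim/big_ind2 : _ => [|? ? ? ? ? ?|i _]; [exact: is_derive_cst|exact: is_deriveD|].
exact: hder.
Qed.

Lemma differentiable_big_sum (I : Type) (r : seq I) (P : pred I)
    (h : I -> V -> R) x :
  (forall i, differentiable (h i) x) ->
  differentiable (fun y => \sum_(i <- r | P i) h i y) x.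
Proof.
move=> hdiff; rewrite -fct_sumE.
elim/big_ind : _ => [|? ? ? ?|i _]; [exact: differentiable_cst|exact: differentiableD|].
exact: hdiff.
Qed.

Lemma differentiable_big_prod (I : Type) (r : seq I) (P : pred I)
    (h : I -> V -> R) x :
  (forall i, differentiable (h i) x) ->
  differentiable (fun y => \prod_(i <- r | P i) h i y) x.
Proof.
move=> hdiff; rewrite -fct_prodE.
elim/big_ind : _ => [|? ? ? ?|i _]; [exact: differentiable_cst|exact: differentiableM|].
exact: hdiff.
Qed.

Lemma is_derive_ln_bern (m : V -> R) b x v :
  differentiable m x -> 0 < m x < 1 ->
  is_derive x v (fun y => ln (bern b (m y)))
    ((b%:R - m x) * ('D_v m x / (m x * (1 - m x)))).
Proof.
move=> m_diff m_itv; have /andP[m_gt0 m_lt1] := m_itv.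
have m_der : derivable m x v by exact: diff_derivable.
have bern_diff : differentiable (fun y => bern b (m y)) x.
  by case: b => //=; exact: differentiableB (differentiable_cst _ _) m_diff.
apply: (is_derive_eq (is_derive_ln_comp v bern_diff (bern_gt0 b m_itv))).
have m_neq0 : m x != 0 by rewrite gt_eqF.
have m1_neq0 : 1 - m x != 0 by rewrite gt_eqF // subr_gt0.
case: b {bern_diff} => /=; first by field; rewrite m_neq0 m1_neq0.
have -> : 'D_v (fun y => 1 - m y) x = - 'D_v m x.
  by rewrite deriveB ?derive_cst ?sub0r //; exact: derivable_cst.
by field; rewrite m_neq0 m1_neq0.
Qed.

End RealValuedDerivatives.

Lemma ln_prod (R : realType) (I : Type) (r : seq I) (P : pred I) (F : I -> R) :
  (forall i, 0 < F i) ->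
  ln (\prod_(i <- r | P i) F i) = \sum_(i <- r | P i) ln (F i).
Proof.
move=> F_gt0; elim: r => [|i r IHr]; first by rewrite !big_nil ln1.
rewrite !big_cons; case: (P i) => //.
by rewrite lnM ?IHr // posrE ?F_gt0 // prodr_gt0.
Qed.

Lemma grad_sumZ (R : realType) (q : nat) (I : Type) (r : seq I) (P : pred I)
    (F : 'rV[R]_q -> R) (H : I -> 'rV[R]_q -> R) (c : I -> R) (w : 'rV[R]_q) :
  (forall v, 'D_v F w = \sum_(i <- r | P i) c i * 'D_v (H i) w) ->
  grad F w = \sum_(i <- r | P i) c i *: grad (H i) w.
Proof.
move=> DF; apply/rowP => k; rewrite !mxE DF summxE.
by apply: eq_bigr => i _; rewrite !mxE.
Qed.

Section ScoreIdentity.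
Variables (R : realType) (q : nat) (G : finType).
Variables (lik : G -> R) (prior : G -> 'rV[R]_q -> R).
Hypothesis prior_gt0 : forall g w, 0 < prior g w.
Hypothesis prior_diff : forall g w, differentiable (prior g) w.
Hypothesis marg_gt0 : forall w, 0 < marg lik prior w.

Lemma sum_post w : \sum_g post lik prior g w = 1.
Proof. by rewrite /post -mulr_suml divff // (gt_eqF (marg_gt0 w)). Qed.

Lemma differentiable_marg w : differentiable (marg lik prior) w.
Proof.
apply: differentiable_big_sum => g.
exact: differentiableM (differentiable_cst _ _) (prior_diff g w).
Qed.

Lemma differentiable_ln_marg w :
  differentiable (fun v => ln (marg lik prior v)) w.
Proof.
apply: (differentiable_comp (differentiable_marg w)).
by apply/derivable1_diffP; case: (is_derive1_ln (marg_gt0 w)).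
Qed.

Lemma derive_ln_marg w v :
  'D_v (fun x => ln (marg lik prior x)) w
  = \sum_g post lik prior g w * 'D_v (fun x => ln (prior g x)) w.
Proof.
have [_ ->] := is_derive_ln_comp v (differentiable_marg w) (marg_gt0 w).
have lik_prior_der g : is_derive w v (fun x => lik g * prior g x)
    (lik g * 'D_v (prior g) w).
  by apply/is_derive_mull/derivableP/diff_derivable.
have [_ ->] := is_derive_big_sum (index_enum G) predT lik_prior_der.
rewrite mulr_suml; apply: eq_bigr => g _.
have [_ ->] := is_derive_ln_comp v (prior_diff g w) (prior_gt0 g w).
by rewrite /post; field; rewrite !gt_eqF.
Qed.

Lemma grad_ln_marg w :
  grad (fun v => ln (marg lik prior v)) w
  = \sum_g post lik prior g w *: grad (fun v => ln (prior g v)) w.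
Proof. exact/grad_sumZ/derive_ln_marg. Qed.

End ScoreIdentity.

Section BernoulliPrior.
Variables (R : realType) (q p : nat).
Variables (lik : {ffun 'I_p -> bool} -> R) (m : 'I_p -> 'rV[R]_q -> R).
Hypothesis m_itv : forall j w, 0 < m j w < 1.
Hypothesis m_diff : forall j w, differentiable (m j) w.

Lemma bern_prior_gt0 g w : 0 < bern_prior m g w.
Proof. by apply: prodr_gt0 => j _; exact: (bern_gt0 (g j) (m_itv j w)). Qed.

Lemma differentiable_bern_prior g w : differentiable (bern_prior m g) w.
Proof.
apply: (differentiable_big_prod _ _ (h := fun j x => bern (g j) (m j x))) => j.
rewrite /bern; case: (g j) => //.
exact: differentiableB (differentiable_cst _ _) (m_diff j w).
Qed.

Lemma derive_ln_bern_prior g w v :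
  'D_v (fun x => ln (bern_prior m g x)) w
  = \sum_(j < p) ((g j)%:R - m j w) * ('D_v (m j) w / (m j w * (1 - m j w))).
Proof.
have -> : (fun x => ln (bern_prior m g x))
          = fun x => \sum_(j < p) ln (bern (g j) (m j x)).
  by apply/funext => x; apply: ln_prod => j; exact: bern_gt0.
by have [_ ->] := is_derive_big_sum (index_enum _) predT
  (fun j => is_derive_ln_bern (g j) v (m_diff j w) (m_itv j w)).
Qed.

Hypothesis marg_gt0 : forall w, 0 < marg lik (bern_prior m) w.

Lemma sum_post_centered j w (mu : R) :
  \sum_g post lik (bern_prior m) g w * ((g j)%:R - mu)
  = post_incl lik m j w - mu.
Proof.
under eq_bigr do rewrite mulrBr.
rewrite sumrB -mulr_suml sum_post // mul1r /post_incl [in RHS]big_mkcond.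
by congr (_ - _); apply: eq_bigr => g _; case: (g j); rewrite ?mulr1 ?mulr0.
Qed.

Lemma derive_ln_marg_bern w v :
  'D_v (fun x => ln (marg lik (bern_prior m) x)) w
  = \sum_(j < p) (post_incl lik m j w - m j w)
                 * ('D_v (m j) w / (m j w * (1 - m j w))).
Proof.
rewrite (derive_ln_marg bern_prior_gt0 differentiable_bern_prior marg_gt0).
under eq_bigr do rewrite derive_ln_bern_prior mulr_sumr.
rewrite exchange_big; apply: eq_bigr => j _.
by rewrite -sum_post_centered mulr_suml; apply: eq_bigr => g _; rewrite mulrA.
Qed.

Lemma grad_ln_marg_bern w :
  grad (fun v => ln (marg lik (bern_prior m) v)) w
  = \sum_(j < p) ((post_incl lik m j w - m j w) / (m j w * (1 - m j w)))
                 *: grad (m j) w.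
Proof.
apply: grad_sumZ => v; rewrite derive_ln_marg_bern.
by apply: eq_bigr => j _; rewrite mulrA mulrAC.
Qed.

End BernoulliPrior.

Definition logistic {R : realType} (t : R) : R := (1 + expR (- t))^-1.

Lemma logistic_itv (R : realType) (t : R) : 0 < logistic t < 1.
Proof.
have gt1 : 1 < 1 + expR (- t) by rewrite ltrDl expR_gt0.
by rewrite invr_gt0 invf_lt1 (lt_trans ltr01).
Qed.

Lemma is_derive_logistic (R : realType) (t : R) :
  is_derive t 1 logistic (logistic t * (1 - logistic t)).
Proof.
pose d (s : R) := 1 + expR (- s).
have d_der : is_derive t 1 d (- expR (- t)).
  have := is_deriveD (is_derive_cst (1 : R) t 1)
    (is_derive1_comp (is_derive_expR (- t)) (is_deriveNid t 1)).
  by rewrite add0r mulrN1.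
have d_neq0 : d t != 0 by rewrite gt_eqF // addr_gt0 // expR_gt0.
apply: (is_derive_eq (is_deriveV d_neq0 d_der)).
by rewrite /logistic -[_ *: _]/(_ * _) /d; field.
Qed.

Section InverseLogit.
Variables (R : realType) (q : nat).
Implicit Types (z w v : 'rV[R]_q).

Lemma is_derive_coord w v (k : 'I_q) :
  is_derive w v (fun x : 'rV[R]_q => x 0 k) (v 0 k).
Proof.
apply: DeriveDef; first exact/diff_derivable/differentiable_coord.
have := derive_mx (@derivable_id _ _ w v); rewrite derive_id.
by move=> /(congr1 (fun M : 'rV[R]_q => M 0 k)); rewrite mxE.
Qed.

Lemma is_derive_dot z w v :
  is_derive w v (fun x : 'rV[R]_q => \sum_(k < q) z 0 k * x 0 k)
    (\sum_(k < q) z 0 k * v 0 k).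
Proof.
by apply: is_derive_big_sum => k; apply/is_derive_mull/is_derive_coord.
Qed.

Lemma differentiable_dot z w :
  differentiable (fun x : 'rV[R]_q => \sum_(k < q) z 0 k * x 0 k) w.
Proof.
apply: differentiable_big_sum => k.
exact: differentiableM (differentiable_cst _ _) (differentiable_coord _ 0 k).
Qed.

Lemma invlogitE z :
  invlogit z = logistic \o (fun x => \sum_(k < q) z 0 k * x 0 k).
Proof. by []. Qed.

Lemma differentiable_invlogit z w : differentiable (invlogit z) w.
Proof.
rewrite invlogitE; apply: (differentiable_comp (differentiable_dot z w)).
apply/derivable1_diffP.
by case: (is_derive_logistic (\sum_(k < q) z 0 k * w 0 k)).
Qed.

Lemma grad_invlogit z w :
  grad (invlogit z) w = (invlogit z w * (1 - invlogit z w)) *: z.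
Proof.
apply/rowP => k; rewrite !mxE invlogitE.
have [_ ->] := is_derive_comp_real (delta_mx 0 k) (differentiable_dot z w)
  (is_derive_logistic _).
have [_ ->] := is_derive_dot z w (delta_mx 0 k).
congr (_ * _); rewrite (bigD1 k) //= big1 => [|i ik]; rewrite !mxE.
  by rewrite !eqxx mulr1 addr0.
by rewrite (negbTE ik) andbF mulr0.
Qed.

Lemma grad_ln_marg_invlogit p (lik : {ffun 'I_p -> bool} -> R)
    (z : 'I_p -> 'rV[R]_q) :
  (forall w, 0 < marg lik (bern_prior (fun j => invlogit (z j))) w) ->
  forall w,
    grad (fun v => ln (marg lik (bern_prior (fun j => invlogit (z j))) v)) w
    = \sum_(j < p) (post_incl lik (fun j => invlogit (z j)) j w
                    - invlogit (z j) w) *: z j.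
Proof.
move=> marg_gt0 w.
have invlogit_itv j x : 0 < invlogit (z j) x < 1 by exact: logistic_itv.
rewrite grad_ln_marg_bern //; last by move=> j x; exact: differentiable_invlogit.
apply: eq_bigr => j _; rewrite grad_invlogit scalerA divfK //.
have /andP[m_gt0 m_lt1] := invlogit_itv j w.
by rewrite mulf_neq0 // gt_eqF // subr_gt0.
Qed.

End InverseLogit.

Theorem theorem3 (R : realType) (q : nat) :
  (* general finite model space *)
  (forall (G : finType) (lik : G -> R) (prior : G -> 'rV[R]_q -> R),
     (forall g, 0 <= lik g) ->
     (forall g w, 0 < prior g w) ->
     (forall g w, differentiable (prior g) w) ->
     (forall w, 0 < marg lik prior w) ->
     forall w : 'rV[R]_q,
       differentiable (fun v => ln (marg lik prior v)) w /\
       grad (fun v => ln (marg lik prior v)) w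
       = \sum_(g : G) post lik prior g w *: grad (fun v => ln (prior g v)) w)
  /\
  (* product-Bernoulli prior on {0,1}^p *)
  (forall (p : nat) (lik : {ffun 'I_p -> bool} -> R) (m : 'I_p -> 'rV[R]_q -> R),
     (forall g, 0 <= lik g) ->
     (forall j w, 0 < m j w < 1) ->
     (forall j w, differentiable (m j) w) ->
     (forall w, 0 < marg lik (bern_prior m) w) ->
     forall w : 'rV[R]_q,
       grad (fun v => ln (marg lik (bern_prior m) v)) w
       = \sum_(j < p) ((post_incl lik m j w - m j w)
                        / (m j w * (1 - m j w))) *: grad (m j) w)
  /\
  (* inverse-logit inclusion probabilities *)
  (forall (p : nat) (lik : {ffun 'I_p -> bool} -> R) (z : 'I_p -> 'rV[R]_q),
     (forall g, 0 <= lik g) ->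
     (forall w, 0 < marg lik (bern_prior (fun j => invlogit (z j))) w) ->
     forall w : 'rV[R]_q,
       grad (fun v => ln (marg lik (bern_prior (fun j => invlogit (z j))) v)) w
       = \sum_(j < p) (post_incl lik (fun j => invlogit (z j)) j w
                        - invlogit (z j) w) *: z j).
Proof.
split.
  move=> G lik prior _ prior_gt0 prior_diff marg_gt0 w.
  by split; [exact: differentiable_ln_marg | exact: grad_ln_marg].
split=> p lik; first by move=> m _; exact: grad_ln_marg_bern.
by move=> z _; exact: grad_ln_marg_invlogit.
Qed.
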